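(* Assume Schanuel's conjecture $(S)$. Then there exist transcendental positive real numbers $x,y,s,t$ with $s\neq t$ such that $x^{y}\neq y^{x}$, $s^{t}=t^{s}$, and the three numbers $x^{y}$, $y^{x}$, $s^{t}$ are integers. (For instance one may take $x\in(2,3)$ with $x^{2^{1/x}}=3$ and $y=2^{1/x}$, so that $x^y=3$, $y^x=2$, and $s<t$ positive reals with $s^t=t^s=17$.)
   Context: Schanuel's conjecture $(S)$: if $\alpha_1,\dots,\alpha_n\in\mathbb{C}$ are linearly independent over $\mathbb{Q}$, then the transcendence degree of $\mathbb{Q}(\alpha_1,\dots,\alpha_n,e^{\alpha_1},\dots,e^{\alpha_n})$ over $\mathbb{Q}$ is at least $n$. Powers of positive reals are the usual real powers. *)

From Stdlib Require Import Reals QArith Qreals List.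
Open Scope R_scope.

Definition C : Type := (R * R)%type.
Definition C0 : C := (0, 0).
Definition C1 : C := (1, 0).
Definition Cadd (z w : C) : C := (fst z + fst w, snd z + snd w).
Definition Cmul (z w : C) : C :=
  (fst z * fst w - snd z * snd w, fst z * snd w + snd z * fst w).
Fixpoint Cpow (z : C) (k : nat) : C :=
  match k with O => C1 | S k' => Cmul z (Cpow z k') end.
Definition Cexp (z : C) : C :=
  (exp (fst z) * cos (snd z), exp (fst z) * sin (snd z)).
Definition QtoC (q : Q) : C := (Q2R q, 0).
Definition RtoC (x : R) : C := (x, 0).

Definition Q_lin_indep (al : list C) : Prop :=
  forall qs : list Q, length qs = length al ->
    fold_right Cadd C0 (map (fun p => Cmul (QtoC (fst p)) (snd p)) (combine qs al)) = C0 ->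
    Forall (fun q => q == 0)%Q qs.

(** Multivariate polynomials over Q in variables z_0,...,z_{m-1}:
    a list of monomials (coefficient, exponent vector). *)
Definition mpoly := list (Q * list nat).

Fixpoint monom_eval (zs : list C) (e : list nat) : C :=
  match zs, e with
  | z :: zs', k :: e' => Cmul (Cpow z k) (monom_eval zs' e')
  | _, _ => C1
  end.

Definition mpoly_eval (zs : list C) (P : mpoly) : C :=
  fold_right Cadd C0 (map (fun m => Cmul (QtoC (fst m)) (monom_eval zs (snd m))) P).

Definition mpoly_nonzero (m : nat) (P : mpoly) : Prop :=
  Forall (fun mo => length (snd mo) = m) P /\
  NoDup (map snd P) /\
  Exists (fun mo => ~ (fst mo == 0)%Q) P.

Definition alg_indep (zs : list C) : Prop :=
  forall P : mpoly, mpoly_nonzero (length zs) P -> mpoly_eval zs P <> C0.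

(** trdeg_Q Q(gens) >= n, via: some n of the generators are algebraically
    independent over Q (a transcendence basis can be extracted from generators). *)
Definition trdeg_ge (gens : list C) (n : nat) : Prop :=
  exists idx : list nat,
    NoDup idx /\ length idx = n /\ Forall (fun i => (i < length gens)%nat) idx /\
    alg_indep (map (fun i => nth i gens C0) idx).

Definition Schanuel : Prop :=
  forall al : list C, Q_lin_indep al ->
    trdeg_ge (al ++ map Cexp al) (length al).

Definition Q_algebraic (x : R) : Prop :=
  exists cs : list Q, Exists (fun q => ~ (q == 0)%Q) cs /\
    fold_right Rplus 0 (map (fun p => Q2R (fst p) * x ^ snd p)
                          (combine cs (seq 0 (length cs)))) = 0.
Definition transcendental (x : R) : Prop := ~ Q_algebraic x.

From Stdlib Require Import Reals QArith Qreals List ZArith Znumtheory Zpow_facts.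
From Stdlib Require Import Lra Lia Classical.
Open Scope R_scope.

(* Let [p, q > 1] with [p ^ q = c ^ k] and [q ^ p = c ^ m] for an integer [c > 1], and put
   [P = ln p], [Q = ln q], [G = ln c], so that [q P = k G] and [p Q = m G]. Suppose [p] is
   algebraic. If [P, Q, G] were linearly independent over Q, Schanuel would make
   [Q(P, Q, G, p, q, c)] of transcendence degree 3, yet it is algebraic over [Q(P, G)]. So
   there is a linear relation, and Schanuel applied to two of the logarithms shows that [q]
   is algebraic and then that [P, G] (and [Q, G]) are linearly dependent, i.e. [p] and [q]
   are rational. In the examples this is impossible: if [a ^ b] is an integer for positive
   rationals [a], [b], then [a] is an integer, while [1 < y < 2] with [y ^ x = 2], and
   [s ^ t = t ^ s = 17] with [1 < s < 3], leave no integral candidates. *)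

(** * Polynomials evaluated at real points *)

Fixpoint rmonom_eval (zs : list R) (e : list nat) : R :=
  match zs, e with
  | z :: zs', k :: e' => z ^ k * rmonom_eval zs' e'
  | _, _ => 1
  end.

Definition rmpoly_eval (zs : list R) (P : mpoly) : R :=
  fold_right Rplus 0 (map (fun mo => Q2R (fst mo) * rmonom_eval zs (snd mo)) P).

Lemma rmpoly_eval_cons zs mo P :
  rmpoly_eval zs (mo :: P) = Q2R (fst mo) * rmonom_eval zs (snd mo) + rmpoly_eval zs P.
Proof. reflexivity. Qed.

Lemma rmpoly_eval_app zs P1 P2 :
  rmpoly_eval zs (P1 ++ P2) = rmpoly_eval zs P1 + rmpoly_eval zs P2.
Proof.
  induction P1 as [|mo P1 IH]; simpl; [unfold rmpoly_eval; simpl; ring|].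
  rewrite !rmpoly_eval_cons, IH. ring.
Qed.

Lemma Cadd_RtoC a b : Cadd (RtoC a) (RtoC b) = RtoC (a + b).
Proof. unfold Cadd, RtoC; simpl; f_equal; ring. Qed.

Lemma Cmul_RtoC a b : Cmul (RtoC a) (RtoC b) = RtoC (a * b).
Proof. unfold Cmul, RtoC; simpl; f_equal; ring. Qed.

Lemma Cpow_RtoC a k : Cpow (RtoC a) k = RtoC (a ^ k).
Proof. induction k as [|k IH]; simpl; [reflexivity|]. now rewrite IH, Cmul_RtoC. Qed.

Lemma Cexp_RtoC x : Cexp (RtoC x) = RtoC (exp x).
Proof. unfold Cexp, RtoC; simpl. rewrite cos_0, sin_0. f_equal; ring. Qed.

Lemma monom_eval_RtoC zs e : monom_eval (map RtoC zs) e = RtoC (rmonom_eval zs e).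
Proof.
  revert e; induction zs as [|z zs IH]; intros [|k e]; simpl; try reflexivity.
  now rewrite IH, Cpow_RtoC, Cmul_RtoC.
Qed.

Lemma mpoly_eval_RtoC zs P : mpoly_eval (map RtoC zs) P = RtoC (rmpoly_eval zs P).
Proof.
  unfold mpoly_eval, rmpoly_eval; induction P as [|mo P IH]; simpl; [reflexivity|].
  rewrite IH, monom_eval_RtoC. unfold QtoC. fold (RtoC (Q2R (fst mo))).
  now rewrite Cmul_RtoC, Cadd_RtoC.
Qed.

Definition has_arity (n : nat) (P : mpoly) : Prop :=
  Forall (fun mo => length (snd mo) = n) P.

Fixpoint mpoly_insert (mo : Q * list nat) (P : mpoly) : mpoly :=
  match P with
  | nil => mo :: nil
  | mo' :: P' => if list_eq_dec Nat.eq_dec (snd mo) (snd mo')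
                 then (Qplus (fst mo) (fst mo'), snd mo') :: P'
                 else mo' :: mpoly_insert mo P'
  end.

Definition mpoly_normalize (P : mpoly) : mpoly := fold_right mpoly_insert nil P.

Lemma rmpoly_eval_insert zs mo P :
  rmpoly_eval zs (mpoly_insert mo P) = rmpoly_eval zs (mo :: P).
Proof.
  induction P as [|mo' P IH]; simpl; [reflexivity|].
  destruct (list_eq_dec Nat.eq_dec (snd mo) (snd mo')) as [E|E];
    rewrite !rmpoly_eval_cons; simpl.
  - rewrite Q2R_plus, E. ring.
  - rewrite IH, rmpoly_eval_cons. ring.
Qed.

Lemma rmpoly_eval_normalize zs P : rmpoly_eval zs (mpoly_normalize P) = rmpoly_eval zs P.
Proof.
  induction P as [|mo P IH]; simpl; [reflexivity|].
  now rewrite rmpoly_eval_insert, !rmpoly_eval_cons, IH.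
Qed.

Lemma has_arity_insert n mo P :
  length (snd mo) = n -> has_arity n P -> has_arity n (mpoly_insert mo P).
Proof.
  intros Hmo; induction 1 as [|mo' P Hmo' HP IH]; simpl; [now repeat constructor|].
  destruct (list_eq_dec Nat.eq_dec (snd mo) (snd mo')); now constructor.
Qed.

Lemma has_arity_normalize n P : has_arity n P -> has_arity n (mpoly_normalize P).
Proof. induction 1; simpl; [constructor | now apply has_arity_insert]. Qed.

Lemma in_exponents_insert mo P e :
  In e (map snd (mpoly_insert mo P)) -> e = snd mo \/ In e (map snd P).
Proof.
  induction P as [|mo' P IH]; simpl; [intros [<-|[]]; now left|].
  destruct (list_eq_dec Nat.eq_dec (snd mo) (snd mo')); simpl; intuition.
Qed.

Lemma NoDup_exponents_normalize P : NoDup (map snd (mpoly_normalize P)).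
Proof.
  induction P as [|mo P IH]; simpl; [constructor|].
  induction (mpoly_normalize P) as [|mo' P' IH']; simpl; [now repeat constructor|].
  simpl in IH; apply NoDup_cons_iff in IH as [Hnin Hnd].
  destruct (list_eq_dec Nat.eq_dec (snd mo) (snd mo')); simpl; constructor; auto.
  intros Hin%in_exponents_insert; intuition.
Qed.

(* Evaluation-level nonvanishing is all we need to produce a polynomial
   satisfying [mpoly_nonzero]: normalizing makes the exponent vectors distinct
   and keeps some nonzero coefficient. *)
Lemma alg_indep_rmpoly_eval_neq0 (rs ws : list R) (P : mpoly) :
  alg_indep (map RtoC rs) -> has_arity (length rs) P ->
  rmpoly_eval ws P <> 0 -> rmpoly_eval rs P <> 0.
Proof.
  intros Hindep Har Hws H0.
  assert (Hnz : Exists (fun mo => ~ (fst mo == 0)%Q) (mpoly_normalize P)).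
  { apply NNPP; intros Hall; apply Hws; rewrite <- (rmpoly_eval_normalize ws).
    induction (mpoly_normalize P) as [|mo P' IH]; [reflexivity|].
    rewrite rmpoly_eval_cons, IH by (intro; apply Hall; now right).
    destruct (Qeq_dec (fst mo) 0) as [E|E]; [|now contradict Hall; left].
    rewrite (Qeq_eqR _ _ E), RMicromega.Q2R_0; ring. }
  apply (Hindep (mpoly_normalize P)).
  - rewrite length_map; split; [now apply has_arity_normalize|].
    split; [apply NoDup_exponents_normalize | exact Hnz].
  - now rewrite mpoly_eval_RtoC, rmpoly_eval_normalize, H0.
Qed.

(** * Polynomial expressions *)

Fixpoint unit_exponent (m i : nat) : list nat :=
  match m, i with
  | O, _ => nil
  | S m', O => 1%nat :: repeat 0%nat m'
  | S m', S i' => 0%nat :: unit_exponent m' i'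
  end.

Fixpoint exponent_add (e1 e2 : list nat) : list nat :=
  match e1, e2 with
  | a :: e1', b :: e2' => (a + b)%nat :: exponent_add e1' e2'
  | _, _ => nil
  end.

Definition mpoly_const (m : nat) (q : Q) : mpoly := (q, repeat 0%nat m) :: nil.
Definition mpoly_var (m i : nat) : mpoly := (1%Q, unit_exponent m i) :: nil.
Definition mpoly_mul (P1 P2 : mpoly) : mpoly :=
  flat_map (fun a => map (fun b => (Qmult (fst a) (fst b), exponent_add (snd a) (snd b))) P2) P1.
Fixpoint mpoly_pow (m : nat) (P : mpoly) (n : nat) : mpoly :=
  match n with O => mpoly_const m 1 | S n' => mpoly_mul P (mpoly_pow m P n') end.

Lemma length_unit_exponent m i : (i < m)%nat -> length (unit_exponent m i) = m.
Proof.
  revert i; induction m as [|m IH]; intros [|i] Hi; simpl; try lia.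
  - now rewrite repeat_length.
  - f_equal; apply IH; lia.
Qed.

Lemma length_exponent_add e1 e2 : length e1 = length e2 -> length (exponent_add e1 e2) = length e1.
Proof. revert e2; induction e1; intros [|b e2] H; simpl in *; try lia. f_equal; auto. Qed.

Lemma rmonom_eval_zero zs m : rmonom_eval zs (repeat 0%nat m) = 1.
Proof. revert m; induction zs as [|z zs IH]; intros [|m]; simpl; auto. rewrite IH; ring. Qed.

Lemma rmonom_eval_unit zs i :
  (i < length zs)%nat -> rmonom_eval zs (unit_exponent (length zs) i) = nth i zs 0.
Proof.
  revert i; induction zs as [|z zs IH]; intros [|i] Hi; simpl in *; try lia.
  - rewrite rmonom_eval_zero; ring.
  - rewrite IH by lia; ring.
Qed.

Lemma rmonom_eval_add zs e1 e2 : length e1 = length zs -> length e2 = length zs ->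
  rmonom_eval zs (exponent_add e1 e2) = rmonom_eval zs e1 * rmonom_eval zs e2.
Proof.
  revert e1 e2; induction zs as [|z zs IH]; intros [|a e1] [|b e2] H1 H2;
    simpl in *; try lia; try ring.
  rewrite IH, pow_add by lia; ring.
Qed.

Lemma has_arity_const m q : has_arity m (mpoly_const m q).
Proof. repeat constructor; apply repeat_length. Qed.

Lemma has_arity_mul m P1 P2 : has_arity m P1 -> has_arity m P2 -> has_arity m (mpoly_mul P1 P2).
Proof.
  intros H1 H2; induction H1 as [|a P1 Ha _ IH]; simpl; [constructor|].
  apply Forall_app; split; [|exact IH].
  apply Forall_map; eapply Forall_impl; [|exact H2]; simpl; intros b Hb.
  rewrite length_exponent_add; congruence.
Qed.

Lemma has_arity_pow m P n : has_arity m P -> has_arity m (mpoly_pow m P n).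
Proof. intros HP; induction n; simpl; [apply has_arity_const | now apply has_arity_mul]. Qed.

Lemma rmpoly_eval_const zs q : rmpoly_eval zs (mpoly_const (length zs) q) = Q2R q.
Proof. unfold rmpoly_eval; simpl; rewrite rmonom_eval_zero; ring. Qed.

Lemma rmpoly_eval_monom_mul zs a P :
  length (snd a) = length zs -> has_arity (length zs) P ->
  rmpoly_eval zs (map (fun b => (Qmult (fst a) (fst b), exponent_add (snd a) (snd b))) P)
  = Q2R (fst a) * rmonom_eval zs (snd a) * rmpoly_eval zs P.
Proof.
  intros Ha; induction 1 as [|b P Hb _ IH]; simpl; [unfold rmpoly_eval; simpl; ring|].
  rewrite !rmpoly_eval_cons, IH; simpl.
  rewrite Q2R_mult, rmonom_eval_add by assumption; ring.
Qed.

Lemma rmpoly_eval_mul zs P1 P2 :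
  has_arity (length zs) P1 -> has_arity (length zs) P2 ->
  rmpoly_eval zs (mpoly_mul P1 P2) = rmpoly_eval zs P1 * rmpoly_eval zs P2.
Proof.
  intros H1 H2; induction H1 as [|a P1 Ha _ IH]; simpl; [unfold rmpoly_eval; simpl; ring|].
  rewrite rmpoly_eval_app, IH, rmpoly_eval_monom_mul, rmpoly_eval_cons by assumption; ring.
Qed.

Lemma rmpoly_eval_pow zs P n : has_arity (length zs) P ->
  rmpoly_eval zs (mpoly_pow (length zs) P n) = rmpoly_eval zs P ^ n.
Proof.
  intros HP; induction n as [|n IH]; simpl.
  - now rewrite rmpoly_eval_const, RMicromega.Q2R_1.
  - rewrite rmpoly_eval_mul, IH by auto using has_arity_pow; reflexivity.
Qed.

Inductive pexpr :=
| PVar (g : nat) | PConst (q : Q) | PAdd (a b : pexpr) | PMul (a b : pexpr)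
| PPow (a : pexpr) (n : nat).

Fixpoint pexpr_eval (f : nat -> R) (E : pexpr) : R :=
  match E with
  | PVar g => f g
  | PConst q => Q2R q
  | PAdd a b => pexpr_eval f a + pexpr_eval f b
  | PMul a b => pexpr_eval f a * pexpr_eval f b
  | PPow a n => pexpr_eval f a ^ n
  end.

Fixpoint pexpr_vars (E : pexpr) : list nat :=
  match E with
  | PVar g => g :: nil
  | PConst _ => nil
  | PAdd a b | PMul a b => pexpr_vars a ++ pexpr_vars b
  | PPow a _ => pexpr_vars a
  end.

Fixpoint index_of (g : nat) (l : list nat) : nat :=
  match l with nil => O | h :: t => if Nat.eqb g h then O else S (index_of g t) end.

Lemma index_of_spec g l : In g l -> (index_of g l < length l)%nat /\ nth (index_of g l) l 0%nat = g.
Proof.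
  induction l as [|h t IH]; simpl; intros H; [contradiction|].
  destruct (Nat.eqb_spec g h) as [->|Hne]; [split; auto; lia|].
  destruct H as [->|H]; [contradiction|].
  destruct (IH H); split; auto; lia.
Qed.

Fixpoint pexpr_to_mpoly (idx : list nat) (E : pexpr) : mpoly :=
  match E with
  | PVar g => mpoly_var (length idx) (index_of g idx)
  | PConst q => mpoly_const (length idx) q
  | PAdd a b => pexpr_to_mpoly idx a ++ pexpr_to_mpoly idx b
  | PMul a b => mpoly_mul (pexpr_to_mpoly idx a) (pexpr_to_mpoly idx b)
  | PPow a n => mpoly_pow (length idx) (pexpr_to_mpoly idx a) n
  end.

Definition vars_in (E : pexpr) (idx : list nat) : Prop :=
  forall g, In g (pexpr_vars E) -> In g idx.

Lemma has_arity_pexpr_to_mpoly idx E :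
  vars_in E idx -> has_arity (length idx) (pexpr_to_mpoly idx E).
Proof.
  unfold vars_in; induction E; simpl; intros H.
  - repeat constructor; apply length_unit_exponent, index_of_spec, H; now left.
  - apply has_arity_const.
  - apply Forall_app; split; [apply IHE1|apply IHE2]; intros; apply H, in_or_app; auto.
  - apply has_arity_mul; [apply IHE1|apply IHE2]; intros; apply H, in_or_app; auto.
  - now apply has_arity_pow, IHE.
Qed.

Lemma rmpoly_eval_pexpr_to_mpoly (f : nat -> R) idx E :
  vars_in E idx -> rmpoly_eval (map f idx) (pexpr_to_mpoly idx E) = pexpr_eval f E.
Proof.
  assert (HL : length (map f idx) = length idx) by apply length_map.
  unfold vars_in; induction E; simpl; intros H.
  - destruct (index_of_spec g idx) as [Hlt Hnth]; [apply H; now left|].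
    unfold mpoly_var; rewrite rmpoly_eval_cons; simpl.
    rewrite <- HL, rmonom_eval_unit by (rewrite HL; auto).
    rewrite nth_indep with (d' := f 0%nat) by (rewrite HL; auto).
    rewrite map_nth, Hnth, RMicromega.Q2R_1; unfold rmpoly_eval; simpl; ring.
  - now rewrite <- HL, rmpoly_eval_const.
  - rewrite rmpoly_eval_app, IHE1, IHE2; auto; intros; apply H, in_or_app; auto.
  - rewrite rmpoly_eval_mul, IHE1, IHE2; auto; try (intros; apply H, in_or_app; auto);
      rewrite HL; apply has_arity_pexpr_to_mpoly; intros g Hg; apply H, in_or_app; auto.
  - rewrite <- HL, rmpoly_eval_pow, IHE; auto.
    rewrite HL; now apply has_arity_pexpr_to_mpoly.
Qed.

Lemma alg_indep_pexpr_eval_neq0 (gens : list R) (idx : list nat) (E : pexpr) (f : nat -> R) :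
  alg_indep (map (fun i => nth i (map RtoC gens) C0) idx) ->
  vars_in E idx -> pexpr_eval f E <> 0 ->
  pexpr_eval (fun g => nth g gens 0) E <> 0.
Proof.
  intros Hindep Hvars Hf.
  assert (Hgens : map (fun i => nth i (map RtoC gens) C0) idx
                  = map RtoC (map (fun i => nth i gens 0) idx)).
  { rewrite map_map; apply map_ext; intro i; apply (map_nth RtoC gens 0). }
  rewrite Hgens in Hindep.
  rewrite <- (rmpoly_eval_pexpr_to_mpoly _ idx) by exact Hvars.
  apply (alg_indep_rmpoly_eval_neq0 _ (map f idx)); [exact Hindep| |].
  - rewrite length_map; now apply has_arity_pexpr_to_mpoly.
  - now rewrite rmpoly_eval_pexpr_to_mpoly.
Qed.

(** * Consequences of Schanuel's conjecture *)

Definition Q_indep2 (X G : R) : Prop :=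
  forall u v : Q, Q2R u * X + Q2R v * G = 0 -> (u == 0 /\ v == 0)%Q.

Definition Q_indep3 (X Y G : R) : Prop :=
  forall u v w : Q, Q2R u * X + Q2R v * Y + Q2R w * G = 0 -> (u == 0 /\ v == 0 /\ w == 0)%Q.

Lemma Q2R_neq0 q : ~ (q == 0)%Q -> Q2R q <> 0.
Proof. intros Hq E; apply Hq, eqR_Qeq; now rewrite E, RMicromega.Q2R_0. Qed.

Lemma Q2R_inject_Z z : Q2R (inject_Z z) = IZR z.
Proof. unfold Q2R, inject_Z; simpl; field. Qed.

Lemma Q_lin_indep_RtoC (l : list R) :
  (forall qs, length qs = length l ->
     fold_right Rplus 0 (map (fun p => Q2R (fst p) * snd p) (combine qs l)) = 0 ->
     Forall (fun q => q == 0)%Q qs) ->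
  Q_lin_indep (map RtoC l).
Proof.
  intros Hl qs Hlen Hsum; apply Hl; [now rewrite Hlen, length_map|].
  assert (Hcomb : forall l', fold_right Cadd C0
            (map (fun p => Cmul (QtoC (fst p)) (snd p)) (combine qs (map RtoC l')))
          = RtoC (fold_right Rplus 0 (map (fun p => Q2R (fst p) * snd p) (combine qs l')))).
  { clear; induction qs as [|q qs IH]; intros [|x l']; simpl; try reflexivity.
    rewrite IH; unfold QtoC; fold (RtoC (Q2R q)); now rewrite Cmul_RtoC, Cadd_RtoC. }
  rewrite Hcomb in Hsum; now injection Hsum.
Qed.

Lemma schanuel_real (l : list R) : Schanuel ->
  (forall qs, length qs = length l ->
     fold_right Rplus 0 (map (fun p => Q2R (fst p) * snd p) (combine qs l)) = 0 ->
     Forall (fun q => q == 0)%Q qs) ->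
  exists idx, NoDup idx /\ length idx = length l /\
    Forall (fun i => (i < 2 * length l)%nat) idx /\
    alg_indep (map (fun i => nth i (map RtoC (l ++ map exp l)) C0) idx).
Proof.
  intros HS Hl.
  destruct (HS _ (Q_lin_indep_RtoC l Hl)) as [idx [Hnd [Hlen [Hlt Hindep]]]].
  assert (Hgens : map RtoC l ++ map Cexp (map RtoC l) = map RtoC (l ++ map exp l)).
  { rewrite map_app, !map_map; f_equal; apply map_ext, Cexp_RtoC. }
  rewrite length_map in Hlen; rewrite Hgens in Hlt, Hindep.
  exists idx; repeat split; auto.
  rewrite length_map, length_app, length_map in Hlt.
  eapply Forall_impl; [|exact Hlt]; simpl; intros; lia.
Qed.

Fixpoint horner (cs : list Q) (z : R) : R :=
  match cs with nil => 0 | c :: cs' => Q2R c + z * horner cs' z end.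

(* For [z <> 0] this is algebraicity; the nonzero constant term ensures that
   the homogenization below does not vanish where the numerator does. *)
Definition nz_algebraic (z : R) : Prop :=
  exists c0 cs, ~ (c0 == 0)%Q /\ horner (c0 :: cs) z = 0.

(* [D ^ deg * p (N / D)] for the polynomial [p] with coefficient list [cs]. *)
Fixpoint horner_hom (cs : list Q) (N D : pexpr) : pexpr :=
  match cs with
  | nil => PConst 0
  | c :: cs' => PAdd (PMul (PConst c) (PPow D (length cs'))) (PMul N (horner_hom cs' N D))
  end.

Lemma horner_hom_eval f cs N D z : pexpr_eval f N = z * pexpr_eval f D ->
  pexpr_eval f D * pexpr_eval f (horner_hom cs N D) = pexpr_eval f D ^ length cs * horner cs z.
Proof.
  intros HN; induction cs as [|c cs IH]; simpl.
  - rewrite RMicromega.Q2R_0; ring.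
  - set (d := pexpr_eval f D) in *.
    replace (d * (Q2R c * d ^ length cs + pexpr_eval f N * pexpr_eval f (horner_hom cs N D)))
      with (Q2R c * d ^ S (length cs) + pexpr_eval f N * (d * pexpr_eval f (horner_hom cs N D)))
      by (simpl; ring).
    rewrite IH, HN; simpl; ring.
Qed.

Lemma vars_in_horner_hom cs N D idx :
  vars_in N idx -> vars_in D idx -> vars_in (horner_hom cs N D) idx.
Proof.
  unfold vars_in; intros HN HD; induction cs as [|c cs IH]; simpl; [tauto|].
  intros g Hg; repeat (apply in_app_or in Hg as [Hg|Hg]); simpl in Hg; auto; contradiction.
Qed.

(* Clearing the denominator of [z = N / D] in a polynomial equation of [z] gives a
   relation among the generators; it is nontrivial because it does not vanish at a point
   where [N] vanishes and [D] does not. *)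
Lemma alg_indep_no_algebraic_ratio (gens : list R) (idx : list nat) (z : R)
    (N D : pexpr) (f : nat -> R) :
  alg_indep (map (fun i => nth i (map RtoC gens) C0) idx) ->
  nz_algebraic z -> vars_in N idx -> vars_in D idx ->
  pexpr_eval (fun g => nth g gens 0) N = z * pexpr_eval (fun g => nth g gens 0) D ->
  pexpr_eval (fun g => nth g gens 0) D <> 0 ->
  pexpr_eval f N = 0 -> pexpr_eval f D <> 0 -> False.
Proof.
  intros Hindep [c0 [cs [Hc0 Hroot]]] HN HD Hratio HDnz HfN HfD.
  apply (alg_indep_pexpr_eval_neq0 gens idx (horner_hom (c0 :: cs) N D) f Hindep).
  - now apply vars_in_horner_hom.
  - simpl; rewrite HfN, Rmult_0_l, Rplus_0_r.
    apply Rmult_integral_contrapositive; split; [now apply Q2R_neq0 | now apply pow_nonzero].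
  - apply (Rmult_eq_reg_l (pexpr_eval (fun g => nth g gens 0) D)); [|exact HDnz].
    rewrite (horner_hom_eval _ _ _ _ z), Hroot by exact Hratio; ring.
Qed.

Lemma nz_algebraic_Q2R w : Q2R w <> 0 -> nz_algebraic (Q2R w).
Proof.
  intros Hw; exists (- w)%Q, (1%Q :: nil); split.
  - intros H%Qeq_eqR; rewrite Q2R_opp, RMicromega.Q2R_0 in H; lra.
  - simpl; rewrite Q2R_opp, RMicromega.Q2R_1; ring.
Qed.

Lemma two_indices (idx : list nat) : NoDup idx -> length idx = 2%nat ->
  Forall (fun i => (i < 4)%nat) idx -> ~ In 2%nat idx -> ~ In 3%nat idx ->
  In 0%nat idx /\ In 1%nat idx.
Proof.
  intros Hnd Hlen Hlt; destruct idx as [|a [|b [|]]]; try discriminate.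
  apply NoDup_cons_iff in Hnd as [Hab _]; inversion Hlt as [|? ? Ha Hb]; inversion Hb.
  simpl in *; lia.
Qed.

Lemma three_indices (idx : list nat) : NoDup idx -> length idx = 3%nat ->
  Forall (fun i => (i < 6)%nat) idx -> ~ In 3%nat idx -> ~ In 5%nat idx ->
  ~ (In 1%nat idx /\ In 2%nat idx) ->
  In 0%nat idx /\ In 4%nat idx /\ (In 1%nat idx \/ In 2%nat idx).
Proof.
  intros Hnd Hlen Hlt; destruct idx as [|a [|b [|d [|]]]]; try discriminate.
  apply NoDup_cons_iff in Hnd as [Ha' Hnd]; apply NoDup_cons_iff in Hnd as [Hb' _].
  rewrite Forall_forall in Hlt.
  assert (a < 6)%nat by (apply Hlt; simpl; auto).
  assert (b < 6)%nat by (apply Hlt; simpl; auto).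
  assert (d < 6)%nat by (apply Hlt; simpl; auto).
  simpl in *; lia.
Qed.

Lemma nz_algebraic_IZR (c : Z) : c <> 0%Z -> nz_algebraic (IZR c).
Proof.
  intros Hc; rewrite <- Q2R_inject_Z; apply nz_algebraic_Q2R.
  rewrite Q2R_inject_Z; now apply not_0_IZR.
Qed.

Ltac solve_vars_in :=
  let g := fresh "g" in let Hg := fresh "Hg" in
  intros g Hg; simpl in Hg; repeat destruct Hg as [<-|Hg]; solve [contradiction | assumption].

(* Schanuel on [X, G]: the generators [X, G, exp X, exp G] (numbered 0 to 3) have
   transcendence degree 2, and [exp X] and [exp G] are algebraic, so [X] and [G] are
   algebraically independent. *)
Lemma schanuel_pair_no_algebraic_ratio (X G z : R) (c : Z) (a b e : Q) :
  Schanuel -> Q_indep2 X G -> nz_algebraic (exp X) -> exp G = IZR c -> c <> 0%Z ->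
  nz_algebraic z -> ~ (a == 0)%Q -> z * (Q2R a * X + Q2R b * G) = Q2R e * G -> False.
Proof.
  intros HS Hindep HX Hc Hc0 Hz Ha Hratio.
  destruct (schanuel_real (X :: G :: nil) HS) as [idx [Hnd [Hlen [Hlt Halg]]]].
  { intros [|u [|v [|]]] Hq Hsum; try discriminate; simpl in Hsum.
    destruct (Hindep u v) as [Hu Hv]; [lra | now repeat constructor]. }
  simpl in Hlen, Hlt.
  destruct (In_dec Nat.eq_dec 2%nat idx) as [I2|I2].
  { apply (alg_indep_no_algebraic_ratio _ idx (exp X) (PVar 2) (PConst 1) (fun _ => 0) Halg HX);
      try solve_vars_in; simpl; rewrite ?RMicromega.Q2R_1; lra. }
  destruct (In_dec Nat.eq_dec 3%nat idx) as [I3|I3].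
  { apply (alg_indep_no_algebraic_ratio _ idx (IZR c) (PVar 3) (PConst 1) (fun _ => 0) Halg);
      try solve_vars_in; simpl; rewrite ?RMicromega.Q2R_1; try lra.
    now apply nz_algebraic_IZR. }
  destruct (two_indices idx Hnd Hlen Hlt I2 I3) as [I0 I1].
  assert (HD : Q2R a * X + Q2R b * G <> 0).
  { intro H0; apply Ha, (Hindep a b H0). }
  apply (alg_indep_no_algebraic_ratio _ idx z (PMul (PConst e) (PVar 1))
           (PAdd (PMul (PConst a) (PVar 0)) (PMul (PConst b) (PVar 1)))
           (fun g => if Nat.eqb g 0 then 1 else 0) Halg Hz);
    try solve_vars_in; simpl; try lra.
  pose proof (Q2R_neq0 _ Ha); lra.
Qed.

(* Schanuel on [X, Y, G]: the generators [X, Y, G, exp X, exp Y, exp G] (numbered 0 to 5)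
   have transcendence degree 3, while the relations make them algebraic over [X], [G]. *)
Lemma schanuel_triple_contra (X Y G : R) (c : Z) (k m : Q) :
  Schanuel -> Q_indep3 X Y G -> nz_algebraic (exp X) -> exp G = IZR c -> c <> 0%Z ->
  exp Y * X = Q2R k * G -> exp X * Y = Q2R m * G -> False.
Proof.
  intros HS Hindep HX Hc Hc0 Hk Hm.
  assert (HY : Y <> 0).
  { intro H0; destruct (Hindep 0 1 0)%Q as [_ [H1 _]]; [rewrite H0; lra | discriminate]. }
  assert (Hk0 : Q2R k <> 0).
  { intro H0; rewrite H0 in Hk; pose proof (exp_pos Y).
    destruct (Hindep 1 0 0)%Q as [H1 _]; [|discriminate].
    rewrite RMicromega.Q2R_1, RMicromega.Q2R_0; nra. }
  destruct (schanuel_real (X :: Y :: G :: nil) HS) as [idx [Hnd [Hlen [Hlt Halg]]]].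
  { intros [|u [|v [|w [|]]]] Hq Hsum; try discriminate; simpl in Hsum.
    destruct (Hindep u v w) as [Hu [Hv Hw]]; [lra | now repeat constructor]. }
  simpl in Hlen, Hlt.
  destruct (In_dec Nat.eq_dec 3%nat idx) as [I3|I3].
  { apply (alg_indep_no_algebraic_ratio _ idx (exp X) (PVar 3) (PConst 1) (fun _ => 0) Halg HX);
      try solve_vars_in; simpl; rewrite ?RMicromega.Q2R_1; lra. }
  destruct (In_dec Nat.eq_dec 5%nat idx) as [I5|I5].
  { apply (alg_indep_no_algebraic_ratio _ idx (IZR c) (PVar 5) (PConst 1) (fun _ => 0) Halg);
      try solve_vars_in; simpl; rewrite ?RMicromega.Q2R_1; try lra.
    now apply nz_algebraic_IZR. }
  destruct (classic (In 1%nat idx /\ In 2%nat idx)) as [[I1 I2]|I12].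
  { apply (alg_indep_no_algebraic_ratio _ idx (exp X) (PMul (PConst m) (PVar 2)) (PVar 1)
             (fun g => if Nat.eqb g 1 then 1 else 0) Halg HX);
      try solve_vars_in; simpl; lra. }
  destruct (three_indices idx Hnd Hlen Hlt I3 I5 I12) as [I0 [I4 [I1|I2]]].
  - (* [exp X = m exp Y X / (k Y)] *)
    apply (alg_indep_no_algebraic_ratio _ idx (exp X) (PMul (PMul (PConst m) (PVar 4)) (PVar 0))
             (PMul (PConst k) (PVar 1)) (fun g => if Nat.eqb g 1 then 1 else 0) Halg HX);
      try solve_vars_in; simpl; try lra.
    + rewrite Rmult_assoc, Hk.
      transitivity (Q2R k * (exp X * Y)); [rewrite Hm|]; ring.
    + now apply Rmult_integral_contrapositive.
  - apply (alg_indep_pexpr_eval_neq0 _ idx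
             (PAdd (PMul (PVar 4) (PVar 0)) (PMul (PConst (- k)) (PVar 2)))
             (fun g => if Nat.eqb g 2 then 0 else 1) Halg);
      try solve_vars_in; simpl; rewrite Q2R_opp; lra.
Qed.

(** * Algebraic solutions are rational *)

Lemma Q_algebraic_sum_horner cs z k :
  fold_right Rplus 0 (map (fun p => Q2R (fst p) * z ^ snd p) (combine cs (seq k (length cs))))
  = z ^ k * horner cs z.
Proof.
  revert k; induction cs as [|c cs IH]; intros k; simpl; [ring|].
  rewrite IH; simpl; ring.
Qed.

Lemma nz_algebraic_of_Q_algebraic z : Q_algebraic z -> z <> 0 -> nz_algebraic z.
Proof.
  intros [cs [Hnz Hsum]] Hz; rewrite Q_algebraic_sum_horner in Hsum; simpl in Hsum.
  assert (Hroot : horner cs z = 0) by lra; clear Hsum.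
  induction cs as [|c cs IH]; [inversion Hnz|].
  destruct (Qeq_dec c 0) as [Hc|Hc]; [|now exists c, cs].
  apply IH.
  - inversion Hnz; [contradiction | assumption].
  - simpl in Hroot; rewrite (Qeq_eqR _ _ Hc), RMicromega.Q2R_0 in Hroot.
    apply (Rmult_eq_reg_l z); [lra | exact Hz].
Qed.

Lemma horner_monomial j z : horner (repeat 0%Q j ++ 1%Q :: nil) z = z ^ j.
Proof.
  induction j as [|j IH]; simpl; rewrite ?IH, ?RMicromega.Q2R_0, ?RMicromega.Q2R_1; ring.
Qed.

Lemma nz_algebraic_of_pow_IZR z (n : nat) (c : Z) :
  (0 < n)%nat -> z ^ n = IZR c -> c <> 0%Z -> nz_algebraic z.
Proof.
  intros Hn Hz Hc; exists (- inject_Z c)%Q, (repeat 0%Q (n - 1) ++ 1%Q :: nil); split.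
  - intros H%Qeq_eqR; apply Hc, eq_IZR.
    rewrite Q2R_opp, Q2R_inject_Z, RMicromega.Q2R_0 in H; lra.
  - simpl; rewrite horner_monomial, Q2R_opp, Q2R_inject_Z, <- Hz.
    replace n with (S (n - 1)) at 1 by lia; simpl; ring.
Qed.

Lemma rational_of_Q_dependent (X G r : R) (k : Q) :
  ~ Q_indep2 X G -> r * X = Q2R k * G -> G <> 0 -> ~ (k == 0)%Q -> exists w, r = Q2R w.
Proof.
  intros Hdep Hr HG Hk.
  apply not_all_ex_not in Hdep as [u Hdep]; apply not_all_ex_not in Hdep as [v Hdep].
  apply imply_to_and in Hdep as [Hsum Hnz].
  pose proof (Q2R_neq0 _ Hk) as Hk'.
  assert (Hlin : Q2R u * Q2R k + Q2R v * r = 0).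
  { apply (Rmult_eq_reg_r G); [|exact HG].
    transitivity (Q2R u * (Q2R k * G) + Q2R v * r * G); [ring|].
    rewrite <- Hr; transitivity (r * (Q2R u * X + Q2R v * G)); [ring|].
    rewrite Hsum; ring. }
  destruct (Qeq_dec v 0) as [Hv|Hv].
  - exfalso; apply Hnz; split; [|exact Hv].
    rewrite (Qeq_eqR _ _ Hv), RMicromega.Q2R_0 in Hlin.
    apply eqR_Qeq; rewrite RMicromega.Q2R_0; apply (Rmult_eq_reg_r (Q2R k)); lra.
  - exists (- (u * k) / v)%Q; rewrite Q2R_div, Q2R_opp, Q2R_mult by exact Hv.
    pose proof (Q2R_neq0 _ Hv); field_simplify_eq; lra.
Qed.

Lemma nz_algebraic_of_rational_exponent (p q : R) (c : Z) (m : nat) (w : Q) :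
  p = Q2R w -> 0 < p -> 0 < q -> 0 < IZR c ->
  p * ln q = INR m * ln (IZR c) -> nz_algebraic q.
Proof.
  intros Hw Hp Hq Hc Hm; destruct w as [n d]; unfold Q2R in Hw; simpl in Hw.
  assert (Hd : 0 < IZR (Z.pos d)) by (apply IZR_lt; lia).
  assert (Hn : (0 < n)%Z).
  { apply lt_IZR; apply (Rmult_lt_reg_r (/ IZR (Z.pos d))); [now apply Rinv_0_lt_compat | lra]. }
  assert (En : INR (Z.to_nat n) = IZR n) by (rewrite INR_IZR_INZ, Z2Nat.id; auto; lia).
  assert (Ed : INR (Pos.to_nat d) = IZR (Z.pos d)) by (now rewrite INR_IZR_INZ, positive_nat_Z).
  apply (nz_algebraic_of_pow_IZR q (Z.to_nat n) (c ^ Z.of_nat (m * Pos.to_nat d))); [lia| |].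
  - rewrite <- pow_IZR; apply ln_inv; try now apply pow_lt.
    rewrite !ln_pow, En, mult_INR, Ed by assumption.
    replace (IZR n) with (IZR (Z.pos d) * p) by (rewrite Hw; field; lra).
    rewrite Rmult_assoc, Hm; ring.
  - intros H0; apply (f_equal IZR) in H0; rewrite <- pow_IZR in H0.
    revert H0; apply pow_nonzero; lra.
Qed.

Definition Q_of_nat (k : nat) : Q := inject_Z (Z.of_nat k).

Lemma Q2R_of_nat k : Q2R (Q_of_nat k) = INR k.
Proof. unfold Q_of_nat; now rewrite Q2R_inject_Z, INR_IZR_INZ. Qed.

Lemma Q_of_nat_neq0 k : (0 < k)%nat -> ~ (Q_of_nat k == 0)%Q.
Proof.
  intros Hk H%Qeq_eqR; rewrite Q2R_of_nat, RMicromega.Q2R_0 in H.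
  revert H; apply not_0_INR; lia.
Qed.

Lemma ln_gt0 x : 1 < x -> 0 < ln x.
Proof. intros; rewrite <- ln_1; apply ln_increasing; lra. Qed.

Lemma rational_of_nz_algebraic_pair (p q : R) (c : Z) (k : nat) :
  Schanuel -> 1 < p -> 1 < q -> 1 < IZR c -> (0 < k)%nat ->
  q * ln p = INR k * ln (IZR c) -> nz_algebraic p -> nz_algebraic q -> exists w, q = Q2R w.
Proof.
  intros HS Hp Hq Hc Hk Hrel Halgp Halgq.
  pose proof (ln_gt0 _ Hc) as HG.
  rewrite <- Q2R_of_nat in Hrel.
  destruct (classic (Q_indep2 (ln p) (ln (IZR c)))) as [Hindep|Hdep].
  - exfalso; apply (schanuel_pair_no_algebraic_ratio (ln p) (ln (IZR c)) q c 1 0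
                      (Q_of_nat k) HS Hindep).
    + now rewrite exp_ln by lra.
    + apply exp_ln; lra.
    + intros ->; lra.
    + exact Halgq.
    + discriminate.
    + rewrite RMicromega.Q2R_1, RMicromega.Q2R_0, <- Hrel; ring.
  - apply (rational_of_Q_dependent _ _ _ _ Hdep Hrel); [lra | now apply Q_of_nat_neq0].
Qed.

Lemma log_Q_dependent (p q : R) (c : Z) (k m : nat) :
  Schanuel -> 1 < p -> 1 < q -> 1 < IZR c ->
  q * ln p = INR k * ln (IZR c) -> p * ln q = INR m * ln (IZR c) -> nz_algebraic p ->
  ~ Q_indep2 (ln p) (ln (IZR c)) \/ ~ Q_indep2 (ln q) (ln (IZR c)).
Proof.
  intros HS Hp Hq Hc Hk Hm Halgp.
  rewrite <- Q2R_of_nat in Hk, Hm.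
  assert (HG : exp (ln (IZR c)) = IZR c) by (apply exp_ln; lra).
  assert (Hc0 : c <> 0%Z) by (intros ->; lra).
  destruct (classic (Q_indep3 (ln p) (ln q) (ln (IZR c)))) as [Hindep|Hdep].
  { exfalso; apply (schanuel_triple_contra _ _ _ c (Q_of_nat k) (Q_of_nat m) HS Hindep);
    rewrite ?exp_ln by lra; auto. }
  destruct (classic (Q_indep2 (ln p) (ln (IZR c)))) as [HPG|HPG]; [right|now left].
  intros HQG.
  apply not_all_ex_not in Hdep as [u Hdep]; apply not_all_ex_not in Hdep as [v Hdep].
  apply not_all_ex_not in Hdep as [w Hdep]; apply imply_to_and in Hdep as [Hsum Hnz].
  destruct (Qeq_dec u 0) as [Hu|Hu].
  - apply Hnz; split; [exact Hu|].
    apply HQG; rewrite (Qeq_eqR _ _ Hu), RMicromega.Q2R_0 in Hsum; lra.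
  - (* [p (u ln p + w ln c) = - v p ln q = - v m ln c] *)
    apply (schanuel_pair_no_algebraic_ratio _ _ p c u w (- (v * Q_of_nat m))
             HS HPG); rewrite ?exp_ln by lra; auto.
    rewrite Q2R_opp, Q2R_mult, Ropp_mult_distr_l_reverse, Rmult_assoc, <- Hm.
    replace (Q2R u * ln p + Q2R w * ln (IZR c)) with (- (Q2R v * ln q)) by lra; ring.
Qed.

Lemma rational_of_algebraic_exp_pair (p q : R) (c : Z) (k m : nat) :
  Schanuel -> 1 < p -> 1 < q -> 1 < IZR c -> (0 < k)%nat -> (0 < m)%nat ->
  q * ln p = INR k * ln (IZR c) -> p * ln q = INR m * ln (IZR c) -> Q_algebraic p ->
  (exists w, p = Q2R w) /\ (exists w, q = Q2R w).
Proof.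
  intros HS Hp Hq Hc Hk0 Hm0 Hk Hm Halg.
  pose proof (ln_gt0 _ Hc) as HG.
  assert (Halgp : nz_algebraic p) by (apply nz_algebraic_of_Q_algebraic; [exact Halg | lra]).
  assert (Halgq : nz_algebraic q).
  { destruct (log_Q_dependent p q c k m HS Hp Hq Hc Hk Hm Halgp) as [Hdep|Hdep];
      rewrite <- Q2R_of_nat in Hk, Hm.
    - destruct (rational_of_Q_dependent _ _ _ _ Hdep Hk) as [w ->];
        [lra | now apply Q_of_nat_neq0 |].
      apply nz_algebraic_Q2R; lra.
    - destruct (rational_of_Q_dependent _ _ _ _ Hdep Hm) as [w Hw];
        [lra | now apply Q_of_nat_neq0 |].
      rewrite Q2R_of_nat in Hm; apply (nz_algebraic_of_rational_exponent p q c m w); auto; lra. }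
  split; [apply (rational_of_nz_algebraic_pair q p c m) |
           apply (rational_of_nz_algebraic_pair p q c k)]; auto.
Qed.

(** * Integrality and the examples *)

Lemma Q2R_coprime_fraction (w : Q) :
  exists n d : Z, Z.gcd n d = 1%Z /\ (0 < d)%Z /\ Q2R w = IZR n / IZR d.
Proof.
  destruct w as [n d]; unfold Q2R; simpl.
  set (g := Z.gcd n (Z.pos d)).
  assert (Hg : (0 < g)%Z).
  { pose proof (Z.gcd_nonneg n (Z.pos d)); pose proof (Z.gcd_eq_0_r n (Z.pos d)); unfold g; lia. }
  assert (En : n = (g * (n / g))%Z)
    by (apply Zdivide_Zdiv_eq; [lia | apply Z.gcd_divide_l]).
  assert (Ed : Z.pos d = (g * (Z.pos d / g))%Z)
    by (apply Zdivide_Zdiv_eq; [lia | apply Z.gcd_divide_r]).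
  exists (n / g)%Z, (Z.pos d / g)%Z; repeat split.
  - apply Z.gcd_div_gcd; unfold g; lia.
  - lia.
  - rewrite En at 1; rewrite Ed at 1; rewrite !mult_IZR; field.
    split; apply not_0_IZR; lia.
Qed.

Lemma integer_of_rational_pow (w : Q) (a : nat) (N : Z) :
  (0 < a)%nat -> Q2R w ^ a = IZR N -> exists z, Q2R w = IZR z.
Proof.
  intros Ha HN; destruct (Q2R_coprime_fraction w) as [n [d [Hcop [Hd Hw]]]].
  assert (Hpow : (n ^ Z.of_nat a = N * d ^ Z.of_nat a)%Z).
  { apply eq_IZR; rewrite mult_IZR, <- !pow_IZR, <- HN, Hw.
    unfold Rdiv; rewrite Rpow_mult_distr, pow_inv; field.
    apply pow_nonzero, not_0_IZR; lia. }
  assert (Hdiv : (d | n ^ Z.of_nat a)%Z).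
  { rewrite Hpow; apply Z.divide_mul_r.
    replace (Z.of_nat a) with (Z.succ (Z.of_nat a - 1)) by lia.
    rewrite Z.pow_succ_r by lia; apply Z.divide_factor_l. }
  assert (Hrel : rel_prime d (n ^ Z.of_nat a)).
  { apply rel_prime_Zpower_r; [lia|]; apply Zgcd_1_rel_prime; now rewrite Z.gcd_comm. }
  assert (Hd1 : (d | 1)%Z)
    by (apply (Gauss _ (n ^ Z.of_nat a)); [now rewrite Z.mul_1_r | exact Hrel]).
  apply Z.divide_1_r in Hd1 as [->| ->]; [|lia].
  exists n; rewrite Hw; field.
Qed.

Lemma integer_of_rational_Rpower (w1 w2 : Q) (N : Z) : 0 < Q2R w1 -> 0 < Q2R w2 ->
  Rpower (Q2R w1) (Q2R w2) = IZR N -> exists z, Q2R w1 = IZR z.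
Proof.
  intros H1 H2 HN; destruct w2 as [a b]; unfold Q2R in H2, HN; simpl in H2, HN.
  assert (Hb : 0 < IZR (Z.pos b)) by (apply IZR_lt; lia).
  assert (Ha : (0 < a)%Z).
  { apply lt_IZR, (Rmult_lt_reg_r (/ IZR (Z.pos b))); [now apply Rinv_0_lt_compat | lra]. }
  apply (integer_of_rational_pow w1 (Z.to_nat a) (N ^ Z.pos b)); [lia|].
  assert (HN0 : 0 < IZR N) by (rewrite <- HN; apply exp_pos).
  rewrite <- Rpower_pow by exact H1; rewrite INR_IZR_INZ, Z2Nat.id by lia.
  rewrite <- (positive_nat_Z b), <- pow_IZR, <- Rpower_pow, <- HN, Rpower_mult by exact HN0.
  rewrite INR_IZR_INZ, positive_nat_Z; f_equal; field; lra.
Qed.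

Lemma Rpower_eq_pow_ln (p q c : R) (k : nat) :
  0 < c -> Rpower p q = c ^ k -> q * ln p = INR k * ln c.
Proof. intros Hc H; now rewrite <- ln_Rpower, H, ln_pow. Qed.

Lemma transcendental_of_Rpower_pair (p q : R) (c : Z) (k m : nat) :
  Schanuel -> 1 < p -> 1 < q -> 1 < IZR c -> (0 < k)%nat -> (0 < m)%nat ->
  Rpower p q = IZR c ^ k -> Rpower q p = IZR c ^ m ->
  ~ ((exists w, p = Q2R w) /\ (exists w, q = Q2R w)) -> transcendental p.
Proof.
  intros HS Hp Hq Hc Hk Hm Hpq Hqp Hirr Halg; apply Hirr.
  apply (rational_of_algebraic_exp_pair p q c k m); auto; apply Rpower_eq_pow_ln; auto; lra.
Qed.

Lemma exp_gt1 x : 0 < x -> 1 < exp x.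
Proof. intros; rewrite <- exp_0; now apply exp_increasing. Qed.

Lemma continuity_pt_ln a : 0 < a -> continuity_pt ln a.
Proof. intros; apply derivable_continuous_pt; exists (/ a); now apply derivable_pt_lim_ln. Qed.

(* [x] solves [x ^ (2 ^ (1/x)) = 4]; then [y = 2 ^ (1/x)]. *)
Lemma exists_Rpower_4_2 : exists x y : R, 1 < x /\ 1 < y < 2 /\ Rpower x y = 4 /\ Rpower y x = 2.
Proof.
  pose proof (ln_gt0 2 ltac:(lra)) as L2.
  destruct (Ranalysis5.IVT_interv (fun x => exp (ln 2 / x) * ln x - 2 * ln 2) 2 4)
    as [x [Hx Hroot]].
  - intros a Ha; reg; try lra; apply continuity_pt_ln; lra.
  - lra.
  - assert (exp (ln 2 / 2) < exp (ln 2)) by (apply exp_increasing; lra).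
    rewrite exp_ln in H by lra; nra.
  - pose proof (exp_gt1 (ln 2 / 4) ltac:(apply Rdiv_lt_0_compat; lra)).
    replace (ln 4) with (2 * ln 2) by (replace 4 with (2 * 2) by ring; rewrite ln_mult; lra).
    nra.
  - exists x, (exp (ln 2 / x)); repeat split; try lra.
    + apply exp_gt1, Rdiv_lt_0_compat; lra.
    + rewrite <- (exp_ln 2) at 2 by lra; apply exp_increasing.
      apply (Rmult_lt_reg_r x); [lra|]; unfold Rdiv; rewrite Rmult_assoc, Rinv_l; nra.
    + unfold Rpower; replace 4 with (exp (ln 2 + ln 2)) by (rewrite exp_plus, exp_ln; lra).
      f_equal; lra.
    + unfold Rpower; rewrite ln_exp; replace (x * (ln 2 / x)) with (ln 2) by (field; lra).
      apply exp_ln; lra.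
Qed.

(* With [t = u s], [s ^ t = t ^ s] forces [s = u ^ (1 / (u - 1))]; choose [u]
   so that the common value is 17. *)
Lemma exists_Rpower_17 : exists s t : R, 1 < s < 3 /\ s < t /\ Rpower s t = 17 /\ Rpower t s = 17.
Proof.
  pose proof (ln_gt0 2 ltac:(lra)) as L2; pose proof (ln_gt0 17 ltac:(lra)) as L17.
  destruct (Ranalysis5.IVT_interv
              (fun u => u * exp (ln u / (u - 1)) * (ln u / (u - 1)) - ln 17) 2 17)
    as [u [Hu Hroot]].
  - intros b Hb; reg; try lra; apply continuity_pt_ln; lra.
  - lra.
  - replace (2 - 1) with 1 by ring; rewrite Rdiv_1_r, exp_ln by lra.
    replace (2 * 2 * ln 2) with (ln 16); [apply Rlt_minus, ln_increasing; lra|].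
    replace 16 with (2 ^ 4) by ring; rewrite ln_pow by lra; simpl; ring.
  - pose proof (exp_gt1 (ln 17 / (17 - 1)) ltac:(apply Rdiv_lt_0_compat; lra)).
    replace (17 * exp (ln 17 / (17 - 1)) * (ln 17 / (17 - 1)) - ln 17)
      with (ln 17 * (17 * exp (ln 17 / (17 - 1)) / 16 - 1)) by field.
    apply Rmult_lt_0_compat; lra.
  - set (a := ln u / (u - 1)) in Hroot.
    pose proof (ln_gt0 u ltac:(lra)) as Lu.
    assert (Ha : 0 < a < 1).
    { pose proof (exp_ineq1 (ln u) ltac:(lra)) as He; rewrite exp_ln in He by lra.
      split; [apply Rdiv_lt_0_compat; lra|].
      apply (Rmult_lt_reg_r (u - 1)); [lra|]; unfold a, Rdiv; rewrite Rmult_assoc, Rinv_l; lra. }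
    assert (Hs : 1 < exp a < 3).
    { split; [now apply exp_gt1|].
      assert (exp a < exp 1) by (apply exp_increasing; lra); pose proof exp_le_3; lra. }
    assert (Hlnu : ln u = a * (u - 1)) by (unfold a; field; lra).
    exists (exp a), (u * exp a); repeat split; try nra.
    + unfold Rpower; rewrite ln_exp, <- (exp_ln 17) by lra; f_equal; lra.
    + unfold Rpower; rewrite ln_mult, ln_exp, <- (exp_ln 17) by lra; f_equal.
      rewrite Hlnu; lra.
Qed.

Lemma not_rational_pair_2 (x y : R) :
  0 < x -> 1 < y < 2 -> Rpower y x = 2 -> ~ ((exists w, x = Q2R w) /\ (exists w, y = Q2R w)).
Proof.
  intros Hx [Hy1 Hy2] Hyx [[w1 ->] [w2 ->]].
  destruct (integer_of_rational_Rpower w2 w1 2) as [z Hz]; try lra.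
  rewrite Hz in Hy1, Hy2; apply lt_IZR in Hy1, Hy2; lia.
Qed.

Lemma not_rational_pair_17 (s t : R) : 1 < s < 3 -> 0 < t ->
  Rpower s t = 17 -> Rpower t s = 17 -> ~ ((exists w, s = Q2R w) /\ (exists w, t = Q2R w)).
Proof.
  intros [Hs1 Hs3] Ht Hst Hts [[w1 ->] [w2 ->]].
  destruct (integer_of_rational_Rpower w1 w2 17) as [z Hz]; try lra.
  destruct (integer_of_rational_Rpower w2 w1 17) as [z' Hz']; try lra.
  rewrite Hz in Hs1, Hs3; apply lt_IZR in Hs1, Hs3.
  assert (z = 2%Z) as -> by lia.
  rewrite Hz, Hz' in Hts; rewrite Hz' in Ht; apply lt_IZR in Ht.
  rewrite (Rpower_pow 2) in Hts by (apply IZR_lt; lia).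
  rewrite pow_IZR in Hts; apply eq_IZR in Hts; rewrite Z.pow_2_r in Hts.
  destruct (Z_le_gt_dec z' 4); nia.
Qed.

Theorem mainTheorem2 :
  Schanuel ->
  exists x y s t : R,
    transcendental x /\ transcendental y /\ transcendental s /\ transcendental t /\
    0 < x /\ 0 < y /\ 0 < s /\ 0 < t /\
    s <> t /\
    Rpower x y <> Rpower y x /\
    Rpower s t = Rpower t s /\
    (exists a : Z, Rpower x y = IZR a) /\
    (exists b : Z, Rpower y x = IZR b) /\
    (exists c : Z, Rpower s t = IZR c).
Proof.
  intros HS.
  destruct exists_Rpower_4_2 as [x [y [Hx [Hy [Hxy Hyx]]]]].
  destruct exists_Rpower_17 as [s [t [Hs [Hst [Hpst Hpts]]]]].
  assert (Hirr_xy := not_rational_pair_2 x y ltac:(lra) Hy Hyx).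
  assert (Hirr_st := not_rational_pair_17 s t Hs ltac:(lra) Hpst Hpts).
  exists x, y, s, t; repeat split; try lra.
  - apply (transcendental_of_Rpower_pair x y 2 2 1); auto; lra.
  - apply (transcendental_of_Rpower_pair y x 2 1 2); try lra; auto.
    intros [? ?]; now apply Hirr_xy.
  - apply (transcendental_of_Rpower_pair s t 17 1 1); auto; lra.
  - apply (transcendental_of_Rpower_pair t s 17 1 1); try lra; auto.
    intros [? ?]; now apply Hirr_st.
  - now exists 4%Z.
  - now exists 2%Z.
  - now exists 17%Z.
Qed.
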